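(* For each $n$ let $\rho^{(n)}$ be a state and $X^{(n)}=(X^{(n)}_1,\dots,X^{(n)}_d)$ observables on a finite-dimensional Hilbert space, let $W^{(n)}(\xi):=e^{\sqrt{-1}\xi^iX^{(n)}_i}$ for $\xi\in\mathbb R^d$, and assume $(X^{(n)},\rho^{(n)})\rightsquigarrow N(0,J)$ for a complex positive semidefinite $d\times d$ matrix $J$. Then, with $S:=\mathrm{Im}\,J$, $\lim_{n\to\infty}\big\|W^{(n)}(\xi)W^{(n)}(\eta)\sqrt{\rho^{(n)}}-e^{\sqrt{-1}\xi^\top S\eta}W^{(n)}(\xi+\eta)\sqrt{\rho^{(n)}}\big\|_{\mathrm{HS}}=0$ for all $\xi,\eta\in\mathbb R^d$, where $\|\cdot\|_{\mathrm{HS}}$ is the Hilbert–Schmidt norm.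
   Context: Summation convention. $N(0,J)$ is the quantum Gaussian state on $\mathrm{CCR}(\mathrm{Im}J)$ (generated by $e^{\sqrt{-1}\xi^iX_i}$ with $e^{\sqrt{-1}\xi^iX_i}e^{\sqrt{-1}\eta^jX_j}=e^{\sqrt{-1}\xi^\top(\mathrm{Im}J)\eta}e^{\sqrt{-1}(\xi+\eta)^iX_i}$) with $\phi(\prod_{t=1}^Te^{\sqrt{-1}\xi_t^iX_i})=\exp(-\tfrac12\sum_t\xi_t^i\xi_t^jJ_{ji}-\sum_{t<u}\xi_t^i\xi_u^jJ_{ji})$; $(X^{(n)},\rho^{(n)})\rightsquigarrow N(0,J)$ means $\mathrm{Tr}\,\rho^{(n)}\prod_te^{\sqrt{-1}\xi_t^iX^{(n)}_i}$ converges to these values for all $T$ and $\xi_1,\dots,\xi_T\in\mathbb R^d$. *)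

From HB Require Import structures.
From mathcomp Require Import all_boot all_order all_algebra.
From mathcomp Require Import all_classical all_reals all_analysis.
From mathcomp Require Import complex.
Set Implicit Arguments.
Unset Strict Implicit.
Unset Printing Implicit Defensive.
Import Order.TTheory GRing.Theory Num.Theory.
Import numFieldNormedType.Exports.
Local Open Scope classical_set_scope.
Local Open Scope ring_scope.

Section QDefs.
Variable R : realType.
Local Notation C := R[i].

Definition cvgC (u : nat -> C) (l : C) : Prop :=
  ((fun n => complex.Re (u n)) @ \oo --> complex.Re l) /\
  ((fun n => complex.Im (u n)) @ \oo --> complex.Im l).

Definition limC (u : nat -> C) : C :=
  Complex (limn (fun n => complex.Re (u n))) (limn (fun n => complex.Im (u n))).

Definition cexp (z : C) : C :=
  Complex (expR (complex.Re z) * cos (complex.Im z))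
          (expR (complex.Re z) * sin (complex.Im z)).

Definition expm n (A : 'M[C]_n) : 'M[C]_n :=
  \matrix_(i, j) limC (fun N => \sum_(k < N) (A ^+ k) i j / (k`!)%:R).

Definition adjmx m n (A : 'M[C]_(m, n)) : 'M[C]_(n, m) := (map_mx Num.conj A)^T.

Definition herm_mx n (A : 'M[C]_n) : Prop := adjmx A = A.

Definition psd_mx n (A : 'M[C]_n) : Prop :=
  herm_mx A /\ forall v : 'cV[C]_n, 0 <= (adjmx v *m A *m v) 0 0.

Definition is_state n (rho : 'M[C]_n) : Prop := psd_mx rho /\ \tr rho = 1.

Definition sqrtm n (A : 'M[C]_n) : 'M[C]_n :=
  xget 0 [set B : 'M[C]_n | psd_mx B /\ B *m B = A].

Definition hs_norm m n (A : 'M[C]_(m, n)) : R :=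
  Num.sqrt (\sum_i \sum_j ((complex.Re (A i j)) ^+ 2 + (complex.Im (A i j)) ^+ 2)).

Definition weyl n d (X : 'I_d -> 'M[C]_n) (xi : 'I_d -> R) : 'M[C]_n :=
  expm ('i%C *: \sum_(i < d) ((xi i)%:C)%C *: X i).

(** value phi(prod_t e^{sqrt(-1) xi_t^i X_i}) of the quantum Gaussian state N(0,J) *)
Definition gauss_char d (J : 'M[C]_d) T (xi : 'I_T -> 'I_d -> R) : C :=
  cexp (- (2%:R^-1) * \sum_(t < T) \sum_(i < d) \sum_(j < d)
                          ((xi t i)%:C)%C * ((xi t j)%:C)%C * J j i
        - \sum_(t < T) \sum_(u < T | (t < u)%N) \sum_(i < d) \sum_(j < d)
                          ((xi t i)%:C)%C * ((xi u j)%:C)%C * J j i).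

Definition qconv d (m : nat -> nat) (rho : forall n, 'M[C]_(m n))
  (X : forall n, 'I_d -> 'M[C]_(m n)) (J : 'M[C]_d) : Prop :=
  forall T (xi : 'I_T -> 'I_d -> R),
    cvgC (fun n => \tr (rho n *m \prod_(t < T) weyl (X n) (xi t))) (gauss_char J xi).

Definition immx d (J : 'M[C]_d) : 'M[R]_d := map_mx (@complex.Im R) J.

End QDefs.

From HB Require Import structures.
From mathcomp Require Import all_boot all_order all_algebra.
From mathcomp Require Import all_classical all_reals all_analysis.
From mathcomp Require Import complex.
From mathcomp Require Import ring.
Set Implicit Arguments.
Unset Strict Implicit.
Unset Printing Implicit Defensive.
Import Order.TTheory GRing.Theory Num.Theory.
Import numFieldNormedType.Exports.
Local Open Scope classical_set_scope.
Local Open Scope ring_scope.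

(* With c := exp(i xi^T S eta) and A := W(xi) W(eta) - c W(xi + eta), the squared
   norm ||A sqrt(rho)||_HS^2 equals Re tr(rho A^* A).  Since W(xi)^* = W(-xi) and
   |c| = 1, A^* A expands into the four Weyl products
     W(-eta) W(-xi) W(xi) W(eta),  W(-eta) W(-xi) W(xi + eta),
     W(-xi - eta) W(xi) W(eta),    W(-xi - eta) W(xi + eta)
   with weights 1, -c, -conj(c), 1.  By the convergence to N(0, J) their
   rho-expectations tend to the Gaussian values 1, conj(c), c, 1, whence
   ||A sqrt(rho)||_HS^2 tends to 1 - |c|^2 - |c|^2 + 1 = 0. *)

Lemma limnN (R : realType) (v : nat -> R) : limn (fun n => - v n) = - limn v.
Proof.
have [cv|dv] := pselect (cvgn v); first exact: limN.
have dNv : ~ cvgn (fun n => - v n).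
  move=> /is_cvgN cNNv; apply: dv.
  by rewrite (_ : v = fun n => - - v n) //; apply: funext => n; rewrite opprK.
by rewrite (dvgP dv) (dvgP dNv) oppr0.
Qed.

Section Adjoint.
Variable R : realType.
Local Notation C := R[i].

Lemma conj_limC (u : nat -> C) : (limC u)^* = limC (fun n => (u n)^*).
Proof.
rewrite /limC.
have -> : (fun n => complex.Re (u n)^*) = (fun n => complex.Re (u n)).
  by apply: funext => n; case: (u n).
have -> : (fun n => complex.Im (u n)^*) = (fun n => - complex.Im (u n)).
  by apply: funext => n; case: (u n).
by rewrite limnN.
Qed.

Lemma adjmxE m n (A : 'M[C]_(m, n)) i j : adjmx A i j = (A j i)^*.
Proof. by rewrite !mxE. Qed.

Lemma adjmxM m n p (A : 'M[C]_(m, n)) (B : 'M[C]_(n, p)) :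
  adjmx (A *m B) = adjmx B *m adjmx A.
Proof.
apply/matrixP => i j; rewrite adjmxE !mxE rmorph_sum.
by apply: eq_bigr => k _; rewrite rmorphM !adjmxE mulrC.
Qed.

Lemma adjmxB m n (A B : 'M[C]_(m, n)) : adjmx (A - B) = adjmx A - adjmx B.
Proof. by apply/matrixP => i j; rewrite !mxE rmorphB. Qed.

Lemma adjmxZ m n a (A : 'M[C]_(m, n)) : adjmx (a *: A) = a^* *: adjmx A.
Proof. by apply/matrixP => i j; rewrite !mxE rmorphM. Qed.

Lemma adjmxX n (A : 'M[C]_n) k : adjmx (A ^+ k) = adjmx A ^+ k.
Proof.
elim: k => [|k IH]; last by rewrite exprS exprSr adjmxM IH.
by apply/matrixP => i j; rewrite !expr0 adjmxE !mxE eq_sym rmorph_nat.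
Qed.

Lemma adjmx_expm n (A : 'M[C]_n) : adjmx (expm A) = expm (adjmx A).
Proof.
apply/matrixP => i j; rewrite adjmxE [in LHS]mxE [in RHS]mxE conj_limC.
congr limC; apply: funext => N; rewrite rmorph_sum; apply: eq_bigr => k _.
by rewrite rmorphM (fmorphV conjc) rmorph_nat -adjmxX adjmxE.
Qed.

Lemma adjmx_weyl n d (X : 'I_d -> 'M[C]_n) (xi : 'I_d -> R) :
  (forall i, herm_mx (X i)) -> adjmx (weyl X xi) = weyl X (fun i => - xi i).
Proof.
move=> hX; rewrite /weyl adjmx_expm; congr expm.
apply/matrixP => a b; rewrite adjmxE !mxE !summxE (rmorphM conjc) (rmorph_sum conjc).
rewrite -mulrNN -sumrN; congr (_ * _).
  by apply/eqP; rewrite eq_complex /= !oppr0 opprK !eqxx.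
apply: eq_bigr => k _; rewrite !mxE (rmorphM conjc) /= oppr0 -mulNr.
congr (_ * _); last by move: (hX k) => /matrixP /(_ a b); rewrite adjmxE.
by apply/eqP; rewrite eq_complex /= oppr0 !eqxx.
Qed.
End Adjoint.

Section HilbertSchmidt.
Variable R : realType.
Local Notation C := R[i].

Lemma hs_norm_sqr m n (A : 'M[C]_(m, n)) : hs_norm A ^+ 2 = complex.Re (\tr (adjmx A *m A)).
Proof.
rewrite /hs_norm sqr_sqrtr; last first.
  by apply: sumr_ge0 => i _; apply: sumr_ge0 => j _; rewrite addr_ge0 // sqr_ge0.
rewrite /mxtrace raddf_sum; under [RHS]eq_bigr do rewrite mxE raddf_sum.
rewrite [RHS]exchange_big; apply: eq_bigr => i _; apply: eq_bigr => j _; rewrite adjmxE.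
by case: (A i j) => a b /=; rewrite mulNr opprK !expr2.
Qed.

Lemma hs_norm0 m n : hs_norm (0 : 'M[C]_(m, n)) = 0.
Proof.
rewrite /hs_norm big1 ?sqrtr0 // => i _.
by rewrite big1 // => j _; rewrite mxE /= expr0n addr0.
Qed.

Lemma sqrtmP m (A : 'M[C]_m) :
  (psd_mx (sqrtm A) /\ sqrtm A *m sqrtm A = A) \/ sqrtm A = 0.
Proof.
have [[B hB]|noB] := pselect (exists B : 'M[C]_m, psd_mx B /\ B *m B = A).
  by left; apply: (xgetPex 0 (P := [set B | psd_mx B /\ B *m B = A])); exists B.
by right; apply: xgetPN => B hB; apply: noB; exists B.
Qed.

(* If [rho] has no positive semidefinite square root, [sqrtm rho] is the junk
   value 0 and the bound is trivial. *)
Lemma hs_norm_mul_sqrtm_le m (A rho : 'M[C]_m) :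
  hs_norm (A *m sqrtm rho) <= Num.sqrt `|complex.Re (\tr (rho *m (adjmx A *m A)))|.
Proof.
have [[[hermB _] sqB]|->] := sqrtmP rho; last by rewrite mulmx0 hs_norm0 sqrtr_ge0.
have -> : hs_norm (A *m sqrtm rho) = Num.sqrt (hs_norm (A *m sqrtm rho) ^+ 2).
  by rewrite sqrtr_sqr ger0_norm // sqrtr_ge0.
rewrite ler_wsqrtr // hs_norm_sqr adjmxM hermB -mulmxA mxtrace_mulC -!mulmxA sqB.
by rewrite mulmxA mxtrace_mulC ler_norm.
Qed.
End HilbertSchmidt.

Section GaussianState.
Variable R : realType.
Local Notation C := R[i].
Variables (d : nat) (J : 'M[C]_d).

Definition gauss_form (a b : 'I_d -> R) : C :=
  \sum_(i < d) \sum_(j < d) ((a i)%:C)%C * ((b j)%:C)%C * J j i.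

Fixpoint gauss_exponent (s : seq ('I_d -> R)) : C :=
  if s is a :: s' then
    - 2%:R^-1 * gauss_form a a - \sum_(b <- s') gauss_form a b + gauss_exponent s'
  else 0.

Lemma gauss_exponent_nth x0 s :
  - 2%:R^-1 * \sum_(t < size s) gauss_form (nth x0 s t) (nth x0 s t)
  - \sum_(t < size s) \sum_(u < size s | (t < u)%N) gauss_form (nth x0 s t) (nth x0 s u)
  = gauss_exponent s.
Proof.
elim: s => [|a s IH]; first by rewrite /= !big_ord0 mulr0 subr0.
have first_row : \sum_(u < (size s).+1 | (0 < u)%N) gauss_form a (nth x0 (a :: s) u)
                 = \sum_(b <- s) gauss_form a b.
  by rewrite big_mkcond big_ord_recl /= add0r (big_nth x0) big_mkord.
have other_rows :
  \sum_(t < size s) \sum_(u < (size s).+1 | (lift ord0 t < u)%N)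
      gauss_form (nth x0 (a :: s) (lift ord0 t)) (nth x0 (a :: s) u)
  = \sum_(t < size s) \sum_(u < size s | (t < u)%N) gauss_form (nth x0 s t) (nth x0 s u).
  apply: eq_bigr => t _; rewrite big_mkcond big_ord_recl /= add0r [RHS]big_mkcond.
  by apply: eq_bigr.
rewrite /= -IH big_ord_recl [X in _ - X]big_ord_recl first_row other_rows /=.
ring.
Qed.

Lemma gauss_char_seq x0 s :
  gauss_char J (fun t : 'I_(size s) => nth x0 s t) = cexp (gauss_exponent s).
Proof. by rewrite -(gauss_exponent_nth x0). Qed.

Lemma gauss_formNl a b : gauss_form (fun i => - a i) b = - gauss_form a b.
Proof.
rewrite /gauss_form -sumrN; apply: eq_bigr => i _; rewrite -sumrN.
by apply: eq_bigr => j _; rewrite raddfN /= !mulNr.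
Qed.

Lemma gauss_formNr a b : gauss_form a (fun i => - b i) = - gauss_form a b.
Proof.
rewrite /gauss_form -sumrN; apply: eq_bigr => i _; rewrite -sumrN.
by apply: eq_bigr => j _; rewrite raddfN /= mulrN !mulNr.
Qed.

Lemma gauss_formDl a b e : gauss_form (fun i => a i + b i) e = gauss_form a e + gauss_form b e.
Proof.
rewrite /gauss_form -big_split; apply: eq_bigr => i _; rewrite -big_split.
by apply: eq_bigr => j _; rewrite raddfD /= !mulrDl.
Qed.

Lemma gauss_formDr a b e : gauss_form a (fun i => b i + e i) = gauss_form a b + gauss_form a e.
Proof.
rewrite /gauss_form -big_split; apply: eq_bigr => i _; rewrite -big_split.
by apply: eq_bigr => j _; rewrite raddfD /= mulrDr !mulrDl.
Qed.

Definition im_form (a b : 'I_d -> R) : R :=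
  \sum_(i < d) \sum_(j < d) a i * immx J i j * b j.

Lemma gauss_form_skew a b : herm_mx J ->
  gauss_form a b - gauss_form b a = - 2%:R * ('i%C * ((im_form a b)%:C)%C).
Proof.
move=> hermJ; rewrite /gauss_form /im_form [X in _ - X]exchange_big /= -sumrB.
rewrite !raddf_sum !mulr_sumr; apply: eq_bigr => i _.
rewrite -sumrB !raddf_sum !mulr_sumr; apply: eq_bigr => j _.
have Jij : J i j = (J j i)^* by move/matrixP: hermJ => /(_ i j); rewrite !mxE.
rewrite Jij /immx mxE Jij; case: (J j i) => x y.
by apply/eqP; rewrite eq_complex /=; apply/andP; split; apply/eqP; ring.
Qed.

Lemma gauss_exponent_opp_pair s : gauss_exponent [:: (fun i => - s i); s] = 0.
Proof. by rewrite /= !big_cons !big_nil !(gauss_formNl, gauss_formNr); field. Qed.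

Lemma gauss_exponent_opp_pairs a b :
  gauss_exponent [:: (fun i => - b i); (fun i => - a i); a; b] = 0.
Proof. by rewrite /= !big_cons !big_nil !(gauss_formNl, gauss_formNr); field. Qed.

Lemma gauss_exponent_opp_pairs_add a b : herm_mx J ->
  gauss_exponent [:: (fun i => - b i); (fun i => - a i); (fun i => a i + b i)]
  = - ('i%C * ((im_form a b)%:C)%C).
Proof.
move=> hermJ; rewrite /= !big_cons !big_nil.
rewrite !(gauss_formNl, gauss_formNr, gauss_formDl, gauss_formDr).
by rewrite -[gauss_form a b](subrK (gauss_form b a)) gauss_form_skew //; field.
Qed.

Lemma gauss_exponent_opp_add_pair a b : herm_mx J ->
  gauss_exponent [:: (fun i => - (a i + b i)); a; b] = 'i%C * ((im_form a b)%:C)%C.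
Proof.
move=> hermJ; rewrite /= !big_cons !big_nil.
rewrite !(gauss_formNl, gauss_formNr, gauss_formDl, gauss_formDr).
by rewrite -[gauss_form a b](subrK (gauss_form b a)) gauss_form_skew //; field.
Qed.

End GaussianState.

Section ComplexExponential.
Variable R : realType.
Local Notation C := R[i].

Lemma cexp0 : cexp (0 : C) = 1.
Proof. by rewrite /cexp /= expR0 cos0 sin0 mul1r mulr0. Qed.

Lemma cexp_iR (t : R) : cexp ('i%C * (t%:C)%C) = (cos t +i* sin t)%C.
Proof. by rewrite /cexp /= !(mul0r, mul1r, subr0, add0r) oppr0 expR0 !mul1r. Qed.

Lemma cexpN_iR (t : R) : cexp (- ('i%C * (t%:C)%C)) = (cexp ('i%C * (t%:C)%C))^*.
Proof.
by rewrite cexp_iR /cexp /= !(mul0r, mul1r, subr0, add0r) !oppr0 expR0 !mul1r cosN sinN.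
Qed.

Lemma conj_cexp_iR_mul (t : R) : (cexp ('i%C * (t%:C)%C))^* * cexp ('i%C * (t%:C)%C) = 1.
Proof.
rewrite cexp_iR; apply/eqP; rewrite eq_complex /= mulNr opprK -!expr2 cos2Dsin2.
by rewrite mulNr mulrC subrr !eqxx.
Qed.

End ComplexExponential.

Section GramExpansion.
Variable R : realType.
Local Notation C := R[i].

Lemma adjmx_subZ_mul m n (P Q : 'M[C]_(m, n)) (c : C) :
  adjmx (P - c *: Q) *m (P - c *: Q) =
  adjmx P *m P - c *: (adjmx P *m Q) - c^* *: (adjmx Q *m P) + (c^* * c) *: (adjmx Q *m Q).
Proof.
rewrite adjmxB adjmxZ mulmxBl !mulmxBr opprD opprK addrA.
by rewrite -!scalemxAl -!scalemxAr scalerA.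
Qed.

(* Stated for an abstract family [F]: rewriting with concrete [weyl] matrices
   would make unification compare distinct [expm] terms, which is very slow. *)
Lemma adjmx_mul_subZ_mul (T : Type) k (F : T -> 'M[C]_k) (a b s a' b' s' : T) (c : C) :
  adjmx (F a) = F a' -> adjmx (F b) = F b' -> adjmx (F s) = F s' -> c^* * c = 1 ->
  adjmx (F a *m F b - c *: F s) *m (F a *m F b - c *: F s) =
    \prod_(x <- [:: b'; a'; a; b]) F x - c *: \prod_(x <- [:: b'; a'; s]) F x
    - c^* *: \prod_(x <- [:: s'; a; b]) F x + \prod_(x <- [:: s'; s]) F x.
Proof.
move=> Fa Fb Fs unit_c; rewrite adjmx_subZ_mul unit_c scale1r adjmxM Fa Fb Fs.
by rewrite !big_cons big_nil !mulr1 -!mulmxE !mulmxA.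
Qed.

Lemma Re_trace_mul_comb k (rho P1 P2 P3 P4 : 'M[C]_k) (c1 c2 : C) :
  complex.Re (\tr (rho *m (P1 - c1 *: P2 - c2 *: P3 + P4))) =
  complex.Re (\tr (rho *m P1)) - complex.Re (c1 * \tr (rho *m P2))
  - complex.Re (c2 * \tr (rho *m P3)) + complex.Re (\tr (rho *m P4)).
Proof. by rewrite mulmxDr !mulmxBr -!scalemxAr !raddfD /= !raddfN /= !mxtraceZ. Qed.

End GramExpansion.

Lemma cvgC_ReM (R : realType) (u : nat -> R[i]) l a : cvgC u l ->
  (fun n => complex.Re (a * u n)) @ \oo --> complex.Re (a * l).
Proof.
move=> [cvRe cvIm].
have ReM (x y : R[i]) : complex.Re (x * y) =
    complex.Re x * complex.Re y - complex.Im x * complex.Im y by case: x; case: y.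
under eq_fun do rewrite ReM.
by rewrite ReM; apply: cvgB; exact: cvgMl_tmp.
Qed.

Lemma qconv_seq (R : realType) d (m : nat -> nat) (rho : forall n, 'M[R[i]]_(m n))
    (X : forall n, 'I_d -> 'M[R[i]]_(m n)) J :
  qconv rho X J -> forall s,
  cvgC (fun n => \tr (rho n *m \prod_(x <- s) weyl (X n) x)) (cexp (gauss_exponent J s)).
Proof.
move=> conv s; rewrite -(gauss_char_seq J (fun _ => 0)).
suff -> : (fun n => \tr (rho n *m \prod_(x <- s) weyl (X n) x)) =
    (fun n => \tr (rho n *m \prod_(t < size s) weyl (X n) (nth (fun _ => 0) s t))).
  exact: conv.
by apply: funext => n; rewrite (big_nth (fun _ => 0)) big_mkord.
Qed.

Section WeylDefect.
Variables (R : realType) (d : nat) (m : nat -> nat).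
Variables (rho : forall n, 'M[R[i]]_(m n)) (X : forall n, 'I_d -> 'M[R[i]]_(m n)).
Variable J : 'M[R[i]]_d.
Hypotheses (hermX : forall n i, herm_mx (X n i)) (hermJ : herm_mx J).
Hypothesis conv : qconv rho X J.
Variables xi eta : 'I_d -> R.

Let c := cexp ('i%C * ((im_form J xi eta)%:C)%C).
Let A n := weyl (X n) xi *m weyl (X n) eta - c *: weyl (X n) (fun i => xi i + eta i).

Lemma cvg_weyl_defect_trace :
  (fun n => complex.Re (\tr (rho n *m (adjmx (A n) *m A n)))) @ \oo --> 0.
Proof.
have -> : (0 : R) =
    complex.Re (cexp (gauss_exponent J
      [:: (fun i => - eta i); (fun i => - xi i); xi; eta]))
  - complex.Re (c * cexp (gauss_exponent J
      [:: (fun i => - eta i); (fun i => - xi i); (fun i => xi i + eta i)]))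
  - complex.Re (c^* * cexp (gauss_exponent J
      [:: (fun i => - (xi i + eta i)); xi; eta]))
  + complex.Re (cexp (gauss_exponent J
      [:: (fun i => - (xi i + eta i)); (fun i => xi i + eta i)])).
  rewrite gauss_exponent_opp_pairs gauss_exponent_opp_pairs_add //.
  rewrite gauss_exponent_opp_add_pair // gauss_exponent_opp_pair cexp0 cexpN_iR.
  by rewrite mulrC conj_cexp_iR_mul subrr sub0r addNr.
under eq_fun do rewrite (adjmx_mul_subZ_mul (adjmx_weyl xi (hermX _))
  (adjmx_weyl eta (hermX _)) (adjmx_weyl _ (hermX _)) (conj_cexp_iR_mul _)) Re_trace_mul_comb.
apply: cvgD; first apply: cvgB; first apply: cvgB.
- exact: (qconv_seq conv _).1.
- exact: cvgC_ReM (qconv_seq conv _).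
- exact: cvgC_ReM (qconv_seq conv _).
- exact: (qconv_seq conv _).1.
Qed.
End WeylDefect.

Theorem lemma7 (R : realType) (d : nat) (m : nat -> nat)
  (rho : forall n, 'M[R[i]]_(m n)) (X : forall n, 'I_d -> 'M[R[i]]_(m n))
  (J : 'M[R[i]]_d) :
  (forall n, is_state (rho n)) ->
  (forall n i, herm_mx (X n i)) ->
  psd_mx J ->
  qconv rho X J ->
  forall xi eta : 'I_d -> R,
    (fun n => hs_norm (weyl (X n) xi * weyl (X n) eta * sqrtm (rho n)
       - cexp ('i%C * ((\sum_(i < d) \sum_(j < d) xi i * immx J i j * eta j)%:C)%C)
           *: (weyl (X n) (fun i => xi i + eta i) * sqrtm (rho n))))
    @ \oo --> (0 : R).
Proof.
move=> _ hermX [hermJ _] conv xi eta.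
have /cvg_norm/(cvg_comp _ _)/(_ (@sqrt_continuous R _)) :=
  cvg_weyl_defect_trace hermX hermJ conv xi eta.
rewrite normr0 sqrtr0 => defect_cvg0.
apply: (squeeze_cvgr _ (cvg_cst 0) defect_cvg0); apply: nearW => n /=.
by rewrite scalemxAl -mulmxBl sqrtr_ge0 hs_norm_mul_sqrtm_le.
Qed.
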